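(* Let $K$ be a field of characteristic zero. Suppose that for all $f,g\in K[X]$ and $x_0,y_0\in K$ the following holds: if $\{(f^n(x_0),g^n(y_0)):n\in\mathbb{N}\}$ has infinite intersection with the diagonal line $X=Y$ in $\mathbb{A}^2$, then the diagonal is periodic under the action of $(f,g)$. Then for all $f,g\in K[X]$, $x_0,y_0\in K$ and every line $L$ in $\mathbb{A}^2$ defined over $K$: if $\{(f^n(x_0),g^n(y_0)):n\in\mathbb{N}\}$ has infinite intersection with $L$, then $L$ is periodic under the action of $(f,g)$.
   Context: $f^n$ denotes the $n$-th iterate of $f$ under composition; $\mathbb{N}$ is the set of positive integers. The pair $(f,g)$ acts on $\mathbb{A}^2$ by $(x,y)\mapsto(f(x),g(y))$; a line $L$ is periodic under this action if there is $k\in\mathbb{N}$ such that $(x,y)\mapsto(f^k(x),g^k(y))$ maps $L$ into $L$. *)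

From HB Require Import structures.
From mathcomp Require Import all_boot all_order all_algebra.
Set Implicit Arguments. Unset Strict Implicit. Unset Printing Implicit Defensive.
Import GRing.Theory.
Local Open Scope ring_scope.

Definition piter (K : fieldType) (f : {poly K}) (n : nat) (x : K) : K :=
  iter n (fun z => f.[z]) x.

(* The line L(a,b,c) = {(x,y) | a x + b y = c}; it is a genuine line
   when (a,b) != (0,0). *)
Definition on_line (K : fieldType) (a b c : K) (p : K * K) : Prop :=
  a * p.1 + b * p.2 = c.

(* Points of the orbit {(f^n x0, g^n y0) : n in N}, N = positive integers. *)
Definition in_orbit (K : fieldType) (f g : {poly K}) (x0 y0 : K) (p : K * K) : Prop :=
  exists n : nat, (0 < n)%N /\ p = (piter f n x0, piter g n y0).

Definition infinite_inter (K : fieldType) (f g : {poly K}) (x0 y0 : K) (a b c : K) : Prop :=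
  ~ exists s : seq (K * K),
      forall p, in_orbit f g x0 y0 p -> on_line a b c p -> p \in s.

Definition periodic_line (K : fieldType) (f g : {poly K}) (a b c : K) : Prop :=
  exists k : nat, (0 < k)%N /\
    forall x y : K, on_line a b c (x, y) ->
      on_line a b c (piter f k x, piter g k y).

(* A line through which the orbit passes infinitely often is either vertical,
   horizontal, or the graph of an invertible affine map h.  On a vertical line
   x = d the orbit of x0 under f hits d twice, so d is f-periodic, and likewise
   for horizontal lines.  In the remaining case conjugating g by h turns the
   line into the diagonal, and periodicity of the diagonal for (f, h^-1 g h)
   transports back to periodicity of the line for (f, g). *)

From HB Require Import structures.
From mathcomp Require Import all_boot all_order all_algebra.
From mathcomp Require Import ring.
From Stdlib Require Import Classical.
Import GRing.Theory.
Local Open Scope ring_scope.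

Section Iterates.
Context {K : fieldType} (f : {poly K}).

Lemma piterD m n x : piter f (m + n) x = piter f m (piter f n x).
Proof. exact: iterD. Qed.

Lemma piter_semiconj (g : {poly K}) (phi : K -> K) :
  (forall y, f.[phi y] = phi g.[y]) ->
  forall n y, piter f n (phi y) = phi (piter g n y).
Proof.
by move=> fg; elim=> // n IHn y; rewrite /piter !iterS -/(piter _ _ _) IHn fg.
Qed.

Lemma piter_periodic_of_hits m n x d :
  (m < n)%N -> piter f m x = d -> piter f n x = d -> piter f (n - m) d = d.
Proof. by move=> /ltnW lemn <- hn; rewrite -piterD subnK. Qed.

Lemma piter_hit_times x d :
  ~ (exists k, (0 < k)%N /\ piter f k d = d) ->
  exists s : seq nat, forall n, piter f n x = d -> n \in s.
Proof.
move=> aperiodic.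
have [[m hm]|nohit] := classic (exists m, piter f m x = d); last first.
  by exists [::] => n hn; case: nohit; exists n.
exists [:: m] => n hn; rewrite inE; apply/eqP.
have [ltnm|ltmn|//] := ltngtP n m; case: aperiodic.
- exists (m - n)%N; rewrite subn_gt0.
  by split; last exact: piter_periodic_of_hits hn hm.
- exists (n - m)%N; rewrite subn_gt0.
  by split; last exact: piter_periodic_of_hits hm hn.
Qed.

End Iterates.

Section OrbitLineIntersection.
Context {K : fieldType} {f g : {poly K}} {x0 y0 a b c : K}.

Lemma finite_hit_times_inter :
  (exists s : seq nat, forall n, (0 < n)%N ->
     on_line a b c (piter f n x0, piter g n y0) -> n \in s) ->
  ~ infinite_inter f g x0 y0 a b c.
Proof.
move=> [s hs]; apply; exists [seq (piter f n x0, piter g n y0) | n <- s].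
by move=> _ [n [n_gt0 ->]] hL; apply: map_f; apply: hs.
Qed.

(* F maps a finite cover of the second intersection onto a cover of the first. *)
Lemma infinite_inter_transfer (f' g' : {poly K}) (x0' y0' a' b' c' : K)
    (F : K * K -> K * K) :
  (forall n, (0 < n)%N -> on_line a b c (piter f n x0, piter g n y0) ->
     on_line a' b' c' (piter f' n x0', piter g' n y0') /\
     F (piter f' n x0', piter g' n y0') = (piter f n x0, piter g n y0)) ->
  infinite_inter f g x0 y0 a b c -> infinite_inter f' g' x0' y0' a' b' c'.
Proof.
move=> hF inf [s hs]; apply: inf; exists (map F s) => _ [n [n_gt0 ->]] hL.
have [hL' <-] := hF n n_gt0 hL.
by apply: map_f; apply: hs => //; exists n.
Qed.

Lemma infinite_inter_swap :
  infinite_inter f g x0 y0 a b c -> infinite_inter g f y0 x0 b a c.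
Proof.
apply: infinite_inter_transfer (fun p => (p.2, p.1)) _ => n _.
by rewrite /on_line /= addrC.
Qed.

Lemma periodic_line_swap :
  periodic_line g f b a c -> periodic_line f g a b c.
Proof.
move=> [k [k_gt0 hk]]; exists k; split=> // x y.
by rewrite /on_line /= addrC => /hk; rewrite /on_line /= addrC.
Qed.

Lemma vertical_line_periodic :
  b = 0 -> a != 0 -> infinite_inter f g x0 y0 a b c -> periodic_line f g a b c.
Proof.
move=> b0 a_neq0 inf.
have onlineE x y : on_line a b c (x, y) <-> x = c / a.
  by rewrite /on_line /= b0 mul0r addr0; split=> [<-|->]; field.
have [[k [k_gt0 hk]]|aperiodic] :=
  classic (exists k, (0 < k)%N /\ piter f k (c / a) = c / a).
  by exists k; split=> // x y /onlineE ->; apply/onlineE.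
exfalso; move: inf; apply: finite_hit_times_inter.
have [s hs] := piter_hit_times f x0 (c / a) aperiodic.
by exists s => n _ /onlineE; apply: hs.
Qed.

End OrbitLineIntersection.

Section NonAxisLine.
Context {K : fieldType}.

(* On the line a x + b y = c the ordinate is line_fun a b c x, and the
   abscissa is line_fun b a c y. *)
Definition line_fun (a b c x : K) : K := (c - a * x) / b.

Definition line_poly (a b c : K) : {poly K} := b^-1 *: (c%:P - a *: 'X).

Lemma horner_line_poly a b c x : (line_poly a b c).[x] = line_fun a b c x.
Proof. by rewrite /line_poly /line_fun !hornerE mulrC. Qed.

Definition line_conj (a b c : K) (g : {poly K}) : {poly K} :=
  line_poly b a c \Po (g \Po line_poly a b c).

Context {a b c : K}.
Hypotheses (a_neq0 : a != 0) (b_neq0 : b != 0).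
Context {f g : {poly K}} {x0 y0 : K}.

Lemma line_funK : cancel (line_fun a b c) (line_fun b a c).
Proof. by move=> x; rewrite /line_fun; field; apply/andP. Qed.

Lemma line_funKV : cancel (line_fun b a c) (line_fun a b c).
Proof. by move=> y; rewrite /line_fun; field; apply/andP. Qed.

Lemma on_lineE x y : on_line a b c (x, y) <-> y = line_fun a b c x.
Proof. by rewrite /on_line /line_fun /=; split=> [<-|->]; field. Qed.

Lemma on_diagonalE (x y : K) : on_line 1 (-1) 0 (x, y) <-> x = y.
Proof.
by rewrite /on_line /= mul1r mulN1r; split=> [/subr0_eq|->]; rewrite ?subrr.
Qed.

Lemma piter_line_conj n y :
  piter (line_conj a b c g) n (line_fun b a c y) = line_fun b a c (piter g n y).
Proof.
apply: piter_semiconj => {}y.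
by rewrite /line_conj !horner_comp !horner_line_poly line_funKV.
Qed.

Lemma infinite_inter_line_conj :
  infinite_inter f g x0 y0 a b c ->
  infinite_inter f (line_conj a b c g) x0 (line_fun b a c y0) 1 (-1) 0.
Proof.
apply: infinite_inter_transfer (fun p => (p.1, line_fun a b c p.2)) _ => n _.
rewrite on_lineE piter_line_conj => ->.
by rewrite /= !line_funK; split=> //; apply/on_diagonalE.
Qed.

Lemma periodic_line_conj :
  periodic_line f (line_conj a b c g) 1 (-1) 0 -> periodic_line f g a b c.
Proof.
move=> [k [k_gt0 hk]]; exists k; split=> // x _ /on_lineE ->; apply/on_lineE.
have /hk/on_diagonalE -> : on_line 1 (-1) 0 (x, x) by apply/on_diagonalE.
have := piter_line_conj k (line_fun a b c x).
by rewrite line_funK => ->; rewrite line_funKV.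
Qed.

End NonAxisLine.

(* The reduction does not use the characteristic hypothesis. *)
Theorem lemma5p1 (K : fieldType) (charK0 : [pchar K] =i pred0) :
  (forall (f g : {poly K}) (x0 y0 : K),
      infinite_inter f g x0 y0 1 (-1) 0 -> periodic_line f g 1 (-1) 0) ->
  forall (f g : {poly K}) (x0 y0 : K) (a b c : K),
    (a, b) != (0, 0) ->
    infinite_inter f g x0 y0 a b c -> periodic_line f g a b c.
Proof.
move=> diagonal_periodic f g x0 y0 a b c ab_neq0 inf.
have [b0|b_neq0] := eqVneq b 0.
  have a_neq0 : a != 0 by apply: contra ab_neq0; rewrite b0 => /eqP ->.
  exact: vertical_line_periodic b0 a_neq0 inf.
have [a0|a_neq0] := eqVneq a 0.
  apply: periodic_line_swap.
  exact: vertical_line_periodic a0 b_neq0 (infinite_inter_swap inf).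
apply: (periodic_line_conj a_neq0 b_neq0) (diagonal_periodic _ _ _ _ _).
exact: (infinite_inter_line_conj a_neq0 b_neq0 inf).
Qed.
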